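(* Let $N\ge2$, $M=2^N$, and let $\mathcal{A}=\{a_0,\dots,a_{M-1}\}$ be a Gray-labelled rectangular $M$-QAM constellation (defined in the context), with $N_I=\lceil N/2\rceil$ in-phase bit positions $\mathcal{N}_I=\{0,\dots,N_I-1\}$ and quadrature bit positions $\mathcal{N}_Q=\{N_I,\dots,N-1\}$. For $y,h\in\mathbb{C}$ let $d_i=|y-ha_i|^2$ and let $f=\sum_{S}\bar d_S\prod_{n\in S}z_n$ be the associated pseudo-Boolean function. Then: (1) for every $S\subseteq\{0,\dots,N-1\}$ with $S\cap\mathcal{N}_I\neq\emptyset$ and $S\cap\mathcal{N}_Q\neq\emptyset$, one has $\bar d_S=0$ for all $y,h\in\mathbb{C}$; (2) the degree of $f$, i.e. the largest $|S|$ such that $\bar d_S$ is not identically zero as a function of $(y,h)\in\mathbb{C}^2$, equals $N_I=\lceil N/2\rceil$.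
   Context: For $i\in\{0,\dots,M-1\}$ write its $N$-bit binary representation as $b_0(i)\cdots b_{N-1}(i)$ with $b_0$ the most significant bit. Given $d_0,\dots,d_{M-1}$, define $f(z_0,\dots,z_{N-1})=\sum_{i}d_i\prod_{n=0}^{N-1}B_{i,n}(z_n)$, $z_n\in\{0,1\}$, with $B_{i,n}(z)=z$ if $b_n(i)=1$ and $1-z$ if $b_n(i)=0$; its multilinear expansion is $f=\sum_{S\subseteq\{0,\dots,N-1\}}\bar d_S\prod_{n\in S}z_n$ with $\bar d_S=\sum_{i:\,b_n(i)=0\ \forall n\notin S}d_i\prod_{n\in S}(-1)^{1-b_n(i)}$. Gray-labelled rectangular $M$-QAM: let $N_Q=\lfloor N/2\rfloor$. Let $g_I:\{0,\dots,2^{N_I}-1\}\to\{0,1\}^{N_I}$ and $g_Q:\{0,\dots,2^{N_Q}-1\}\to\{0,1\}^{N_Q}$ be bijections such that consecutive values $g_I(u),g_I(u+1)$ differ in exactly one coordinate, and likewise for $g_Q$. With $c>0$ set $x_u=c(2u+1-2^{N_I})$, $y_v=c(2v+1-2^{N_Q})$. The point $a_i$ whose in-phase bits $b_0(i)\cdots b_{N_I-1}(i)$ equal $g_I(u)$ and whose quadrature bits $b_{N_I}(i)\cdots b_{N-1}(i)$ equal $g_Q(v)$ is $a_i=x_u+j\,y_v$ ($j=\sqrt{-1}$). *)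

From HB Require Import structures.
From mathcomp Require Import all_boot all_order all_algebra.
Set Implicit Arguments. Unset Strict Implicit. Unset Printing Implicit Defensive.
Import Order.TTheory GRing.Theory Num.Theory.
Local Open Scope ring_scope.

Definition NQ (N : nat) : nat := N./2.
Definition NI (N : nat) : nat := (N - N./2)%N.

(* b_n(i): the n-th bit of the N-bit binary representation of i,
   b_0 being the most significant bit. *)
Definition bitn (N n i : nat) : bool := odd (i %/ 2 ^ (N.-1 - n)).

Definition ibits (N : nat) (i : nat) : {ffun 'I_(NI N) -> bool} :=
  [ffun k : 'I_(NI N) => bitn N k i].
Definition qbits (N : nat) (i : nat) : {ffun 'I_(NQ N) -> bool} :=
  [ffun k : 'I_(NQ N) => bitn N (NI N + k) i].

Definition gray_labelling (K : nat) (g : 'I_(2 ^ K) -> {ffun 'I_K -> bool}) : Prop :=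
  bijective g /\
  forall u v : 'I_(2 ^ K), val v = (val u).+1 ->
    #|[set k : 'I_K | g u k != g v k]| = 1%N.

Definition dbar (C : nzRingType) (N : nat) (d : 'I_(2 ^ N) -> C) (S : {set 'I_N}) : C :=
  \sum_(i : 'I_(2 ^ N) | [forall n : 'I_N, (n \notin S) ==> ~~ bitn N n i])
     d i * \prod_(n in S) (if bitn N n i then 1 else -1).

Definition dist2 (C : numClosedFieldType) (N : nat) (a : 'I_(2 ^ N) -> C) (y h : C)
  : 'I_(2 ^ N) -> C := fun i => `|y - h * a i| ^+ 2.

(* The points of the constellation are a_i = x_i + j y_i with x_i a function of the
   in-phase bits and y_i a function of the quadrature bits, both real; hence the cross
   term x_i y_i of |y - h a_i|^2 cancels and d splits as F(in-phase bits) + G(quadrature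
   bits).  A coefficient dbar_S of a function that ignores some bit n in S vanishes,
   since flipping bit n pairs off the terms with opposite signs; this gives (1), and
   also dbar_S = 0 whenever |S| > N_I, as the quadrature block has N_Q <= N_I positions.
   For S the in-phase block, d(1,1) - d(-1,1) = -4 x_i, and along the Gray code the
   sign prod_n (-1)^(1-b_n) alternates, so this coefficient is
   -/+ 4c sum_u (-1)^u (2u + 1 - 2^N_I) = +/- 4c 2^N_I, which is not 0. *)

From HB Require Import structures.
From mathcomp Require Import all_boot all_order all_algebra.
From mathcomp Require Import zify ring.
Import Order.TTheory GRing.Theory Num.Theory.
Set Implicit Arguments. Unset Strict Implicit.
Local Open Scope ring_scope.

Lemma binary_digits_inj K i j : (i < 2 ^ K)%N -> (j < 2 ^ K)%N ->
  (forall k, (k < K)%N -> odd (i %/ 2 ^ k) = odd (j %/ 2 ^ k)) -> i = j.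
Proof.
elim: K i j => [|K IHK] i j ltiK ltjK eq_digits.
  by move: ltiK ltjK; rewrite expn0 !ltnS !leqn0 => /eqP-> /eqP->.
have eq_odd := eq_digits 0%N isT; rewrite !expn0 !divn1 in eq_odd.
have eq_half : i./2 = j./2.
  apply: IHK; rewrite -?divn2 ?ltn_divLR -?expnSr // => k ltkK.
  by have := eq_digits k.+1 ltkK; rewrite expnS !divnMA !divn2.
by rewrite -[i]odd_double_half -[j]odd_double_half eq_half eq_odd.
Qed.

Definition bits N (i : 'I_(2 ^ N)) : {ffun 'I_N -> bool} := [ffun n : 'I_N => bitn N n i].
Arguments bits : clear implicits.

Lemma bits_inj N : injective (@bits N).
Proof.
move=> i j /ffunP eq_ij; apply/val_inj/(@binary_digits_inj N); rewrite ?ltn_ord // => k ltkN.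
have ltN : (N.-1 - k < N)%N by lia.
have := eq_ij (Ordinal ltN); rewrite !ffunE /bitn /=.
by have -> : (N.-1 - (N.-1 - k) = k)%N by lia.
Qed.

Lemma bits_bij N : bijective (@bits N).
Proof.
apply: inj_card_bij; first exact: bits_inj.
by rewrite card_ffun card_bool !card_ord.
Qed.

Definition sgnb (R : nzRingType) (b : bool) : R := if b then 1 else -1.

Lemma sgnbN (R : nzRingType) b : sgnb R (~~ b) = - sgnb R b.
Proof. by case: b; rewrite /sgnb /= ?opprK. Qed.

Definition par (R : nzRingType) K (f : {ffun 'I_K -> bool}) : R := \prod_k sgnb R (f k).

Definition supp_in K (S : {set 'I_K}) (b : {ffun 'I_K -> bool}) : bool :=
  [forall n, (n \notin S) ==> ~~ b n].

Definition mlcoef (R : nzRingType) K (D : {ffun 'I_K -> bool} -> R) (S : {set 'I_K}) : R :=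
  \sum_(b | supp_in S b) D b * \prod_(n in S) sgnb R (b n).

Lemma dbar_bits (R : nzRingType) N (D : {ffun 'I_N -> bool} -> R) (S : {set 'I_N}) :
  dbar (fun i => D (bits N i)) S = mlcoef D S.
Proof.
rewrite /mlcoef (reindex (@bits N)) /=; last exact/onW_bij/bits_bij.
apply: eq_big => [i | i _]; first by apply: eq_forallb => n; rewrite ffunE.
by congr (_ * _); apply: eq_bigr => n _; rewrite ffunE.
Qed.

Lemma eq_dbar (R : nzRingType) N (d1 d2 : 'I_(2 ^ N) -> R) (S : {set 'I_N}) :
  d1 =1 d2 -> dbar d1 S = dbar d2 S.
Proof. by move=> eq_d; apply: eq_bigr => i _; rewrite eq_d. Qed.

Lemma dbarD (R : nzRingType) N (d1 d2 : 'I_(2 ^ N) -> R) (S : {set 'I_N}) :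
  dbar (fun i => d1 i + d2 i) S = dbar d1 S + dbar d2 S.
Proof. by rewrite -big_split; apply: eq_bigr => i _; rewrite mulrDl. Qed.

Lemma dbarB (R : nzRingType) N (d1 d2 : 'I_(2 ^ N) -> R) (S : {set 'I_N}) :
  dbar (fun i => d1 i - d2 i) S = dbar d1 S - dbar d2 S.
Proof. by rewrite -sumrB; apply: eq_bigr => i _; rewrite mulrBl. Qed.

Lemma dbarZ (R : nzRingType) N (k : R) (d : 'I_(2 ^ N) -> R) (S : {set 'I_N}) :
  dbar (fun i => k * d i) S = k * dbar d S.
Proof. by rewrite mulr_sumr; apply: eq_bigr => i _; rewrite mulrA. Qed.

Definition flip K (n : 'I_K) (b : {ffun 'I_K -> bool}) : {ffun 'I_K -> bool} :=
  [ffun m => (m == n) (+) b m].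

Lemma flipK K (n : 'I_K) : involutive (flip n).
Proof. by move=> b; apply/ffunP => m; rewrite !ffunE addKb. Qed.

Lemma supp_in_flip K (S : {set 'I_K}) n b : n \in S -> supp_in S (flip n b) = supp_in S b.
Proof.
move=> nS; apply: eq_forallb => m; rewrite ffunE.
by case: (eqVneq m n) => [->|]; rewrite ?nS.
Qed.

Lemma prod_sgnb_flip (R : comNzRingType) K (S : {set 'I_K}) n b : n \in S ->
  \prod_(m in S) sgnb R (flip n b m) = - \prod_(m in S) sgnb R (b m).
Proof.
move=> nS; rewrite (bigD1 n) // [in RHS](bigD1 n) //= ffunE eqxx sgnbN mulNr.
by congr (- (_ * _)); apply: eq_bigr => m /andP[_ /negbTE]; rewrite ffunE => ->.
Qed.

(* The involution [flip n] exchanges the terms with [b n] and [~~ b n], of opposite signs. *)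
Lemma mlcoef_flip_eq0 (R : comNzRingType) K (D : {ffun 'I_K -> bool} -> R) (S : {set 'I_K}) n :
  n \in S -> (forall b, D (flip n b) = D b) -> mlcoef D S = 0.
Proof.
move=> nS D_flip; rewrite /mlcoef (bigID (fun b : {ffun 'I_K -> bool} => b n)) /=.
rewrite [X in _ + X](reindex (flip n)) /=; last exact/onW_bij/inv_bij/flipK.
rewrite [X in _ + X](eq_big (fun b => supp_in S b && b n)
                        (fun b => - (D b * \prod_(m in S) sgnb R (b m)))).
- by rewrite sumrN addrN.
- by move=> b; rewrite supp_in_flip // ffunE eqxx negbK.
- by move=> b _; rewrite D_flip prod_sgnb_flip // mulrN.
Qed.

Definition restr K L (r : 'I_L -> 'I_K) (b : {ffun 'I_K -> bool}) : {ffun 'I_L -> bool} :=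
  [ffun l => b (r l)].

Lemma mlcoef_restr_eq0 (R : comNzRingType) K L (r : 'I_L -> 'I_K)
    (F : {ffun 'I_L -> bool} -> R) (S : {set 'I_K}) n :
  n \in S -> (forall l, r l != n) -> mlcoef (fun b => F (restr r b)) S = 0.
Proof.
move=> nS r_neq; apply: (mlcoef_flip_eq0 nS) => b; congr F.
by apply/ffunP => l; rewrite !ffunE (negbTE (r_neq l)).
Qed.

Definition ext K L (r : 'I_L -> 'I_K) (f : {ffun 'I_L -> bool}) : {ffun 'I_K -> bool} :=
  [ffun k => if [pick l | r l == k] is Some l then f l else false].

Section Extension.
Variables (K L : nat) (r : 'I_L -> 'I_K).
Hypothesis r_inj : injective r.

Lemma ext_id f l : ext r f (r l) = f l.
Proof.
rewrite ffunE; case: pickP => [l' /eqP/r_inj -> // | /(_ l)].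
by rewrite eqxx.
Qed.

Lemma supp_in_ext f : supp_in [set r l | l : 'I_L] (ext r f).
Proof.
apply/forallP => k; apply/implyP => kNr; rewrite ffunE.
case: pickP => // l /eqP rl_k; move: kNr; rewrite -rl_k.
by rewrite imset_f.
Qed.

Lemma ext_restr b : supp_in [set r l | l : 'I_L] b -> ext r (restr r b) = b.
Proof.
move=> /forallP supp_b; apply/ffunP => k; rewrite ffunE.
case: pickP => [l /eqP <- | Nr]; first by rewrite ffunE.
apply/esym/negbTE/(implyP (supp_b k))/imsetP => -[l _ /esym/eqP].
by rewrite Nr.
Qed.

Lemma mlcoef_restr_image (R : comNzRingType) (F : {ffun 'I_L -> bool} -> R) :
  mlcoef (fun b => F (restr r b)) [set r l | l : 'I_L] =
  \sum_f F f * par R f.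
Proof.
rewrite /mlcoef (reindex (ext r)) /=; last first.
  exists (restr r) => [f _ | b /ext_restr //].
  by apply/ffunP => l; rewrite ffunE ext_id.
apply: eq_big => [f | f _]; first exact: supp_in_ext.
rewrite big_imset /=; last by move=> ? ? _ _ /r_inj.
congr (F _ * _); first by apply/ffunP => l; rewrite ffunE ext_id.
by apply: eq_bigr => l _; rewrite ext_id.
Qed.

End Extension.

Lemma NI_le N : (NI N <= N)%N.
Proof. exact: leq_subr. Qed.

Lemma NI_add_NQ N : (NI N + NQ N = N)%N.
Proof. by rewrite /NI /NQ subnK // -divn2 leq_div. Qed.

Lemma NQ_le_NI N : (NQ N <= NI N)%N.
Proof. rewrite /NI /NQ; have := odd_double_half N; rewrite -muln2; lia. Qed.

Lemma NI_gt0 N : (0 < N)%N -> (0 < NI N)%N.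
Proof. rewrite /NI; have := odd_double_half N; rewrite -muln2; lia. Qed.

Definition iidx N : 'I_(NI N) -> 'I_N := widen_ord (NI_le N).
Definition qidx N (k : 'I_(NQ N)) : 'I_N := cast_ord (NI_add_NQ N) (rshift (NI N) k).
Arguments iidx : clear implicits.
Arguments qidx : clear implicits.

Definition inphase N : {set 'I_N} := [set iidx N k | k : 'I_(NI N)].
Definition quadrature N : {set 'I_N} := [set qidx N k | k : 'I_(NQ N)].

Lemma iidx_inj N : injective (iidx N).
Proof. by move=> k l /(congr1 val) eq_kl; apply: val_inj. Qed.

Lemma card_inphase N : #|inphase N| = NI N.
Proof. by rewrite card_imset ?card_ord //; exact: iidx_inj. Qed.

Lemma mem_inphase N (m : 'I_N) : (m \in inphase N) = (m < NI N)%N.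
Proof.
apply/imsetP/idP => [[k _ ->] | ltm]; first exact: (ltn_ord k).
by exists (Ordinal ltm) => //; apply: val_inj.
Qed.

Lemma mem_quadrature N (m : 'I_N) : (m \in quadrature N) = (NI N <= m)%N.
Proof.
apply/imsetP/idP => [[k _ ->] | lem]; first exact: leq_addr.
have ltm : (m - NI N < NQ N)%N by have := ltn_ord m; have := NI_add_NQ N; lia.
by exists (Ordinal ltm) => //; apply: val_inj => /=; rewrite subnKC.
Qed.

Lemma card_gt_NI_mixed N (S : {set 'I_N}) : (NI N < #|S|)%N ->
  (exists2 n, n \in S & (n < NI N)%N) /\ (exists2 n, n \in S & (NI N <= n)%N).
Proof.
move=> ltS; split.
- have /subsetPn [n nS] : ~~ (S \subset quadrature N).
    apply: contraTN ltS => /subset_leq_card leS; rewrite -leqNgt (leq_trans leS) //.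
    by rewrite (leq_trans (leq_imset_card _ _)) // card_ord NQ_le_NI.
  by rewrite mem_quadrature -ltnNge; exists n.
- have /subsetPn [n nS] : ~~ (S \subset inphase N).
    by apply: contraTN ltS => /subset_leq_card; rewrite card_inphase -leqNgt.
  by rewrite mem_inphase -leqNgt; exists n.
Qed.

Lemma ibitsE N (i : 'I_(2 ^ N)) : ibits N i = restr (iidx N) (bits N i).
Proof. by apply/ffunP => k; rewrite !ffunE. Qed.

Lemma qbitsE N (i : 'I_(2 ^ N)) : qbits N i = restr (qidx N) (bits N i).
Proof. by apply/ffunP => k; rewrite !ffunE. Qed.

Lemma dbar_ibits_eq0 (R : comNzRingType) N (F : {ffun 'I_(NI N) -> bool} -> R)
    (S : {set 'I_N}) n :
  n \in S -> (NI N <= n)%N -> dbar (fun i => F (ibits N i)) S = 0.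
Proof.
move=> nS NI_le_n; under eq_dbar do rewrite ibitsE.
rewrite (dbar_bits (fun b => F (restr (iidx N) b))) (mlcoef_restr_eq0 _ nS) // => k.
by apply: contraTneq NI_le_n => <-; rewrite -ltnNge; exact: (ltn_ord k).
Qed.

Lemma dbar_qbits_eq0 (R : comNzRingType) N (G : {ffun 'I_(NQ N) -> bool} -> R)
    (S : {set 'I_N}) n :
  n \in S -> (n < NI N)%N -> dbar (fun i => G (qbits N i)) S = 0.
Proof.
move=> nS lt_n_NI; under eq_dbar do rewrite qbitsE.
rewrite (dbar_bits (fun b => G (restr (qidx N) b))) (mlcoef_restr_eq0 _ nS) // => k.
by apply: contraTneq lt_n_NI => <-; rewrite -leqNgt; exact: leq_addr.
Qed.

Lemma dbar_ibits_inphase (R : comNzRingType) N (F : {ffun 'I_(NI N) -> bool} -> R) :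
  dbar (fun i => F (ibits N i)) (inphase N) = \sum_f F f * par R f.
Proof.
under eq_dbar do rewrite ibitsE.
by rewrite (dbar_bits (fun b => F (restr (iidx N) b))) mlcoef_restr_image //; exact: iidx_inj.
Qed.

Lemma par_step (R : comNzRingType) K (f g : {ffun 'I_K -> bool}) :
  #|[set k | f k != g k]| = 1%N -> par R g = - par R f.
Proof.
move=> /eqP/cards1P [k0 diff_k0].
have f_g k : k != k0 -> f k = g k.
  by move=> neq; apply/eqP; apply: contraNT neq => ne; rewrite -in_set1 -diff_k0 inE.
have g_k0 : g k0 = ~~ f k0.
  by have := set11 k0; rewrite -diff_k0 inE; case: (f k0); case: (g k0).
rewrite /par (bigD1 k0) // [in RHS](bigD1 k0) //= g_k0 sgnbN mulNr.
by congr (- (_ * _)); apply: eq_bigr => k /f_g ->.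
Qed.

Lemma gray_par (R : comNzRingType) K (g : 'I_(2 ^ K) -> {ffun 'I_K -> bool}) :
  gray_labelling g -> forall u, par R (g u) = par R (g (Ordinal (expn_gt0 2 K))) * (-1) ^+ u.
Proof.
move=> [_ g_step] [u ltu]; elim: u ltu => [|u IHu] ltu /=.
  by rewrite expr0 mulr1; congr (par _ (g _)); apply: val_inj.
by rewrite (par_step R (g_step (Ordinal (ltnW ltu)) (Ordinal ltu) erefl)) IHu exprS mulN1r mulrN.
Qed.

Lemma par_neq0 (R : idomainType) K (f : {ffun 'I_K -> bool}) : par R f != 0.
Proof. by apply/prodf_neq0 => k _; case: (f k); rewrite /sgnb ?oppr_eq0 oner_eq0. Qed.

Lemma sum_sign_oddB (R : comNzRingType) (M : R) n :
  \sum_(u < n.*2) (-1) ^+ u * ((u.*2.+1)%:R - M) = - (n.*2)%:R.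
Proof.
elim: n => [|n IHn]; first by rewrite big_ord0 oppr0.
rewrite doubleS !big_ord_recr /= IHn exprS -signr_odd odd_double expr0 mulr1 mulN1r.
by rewrite -!muln2; ring.
Qed.

Definition pam (R : nzRingType) (c : R) (K u : nat) : R := c * ((u.*2.+1)%:R - (2 ^ K)%:R).

Lemma sum_sign_pam (R : comNzRingType) (c : R) K : (0 < K)%N ->
  \sum_(u < 2 ^ K) (-1) ^+ u * pam c K u = - (c * (2 ^ K)%:R).
Proof.
case: K => // K _; under eq_bigr do rewrite /pam mulrCA.
by rewrite -mulr_sumr expnS mul2n sum_sign_oddB mulrN.
Qed.

Lemma pam_real (R : numDomainType) (c : R) K u : c \is Num.real -> pam c K u \is Num.real.
Proof. by move=> c_real; rewrite rpredM // rpredB // realn. Qed.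

(* The cross term in [x * z] cancels because [x] and [z] are real. *)
Lemma normC_sub_mul_cplx (C : numClosedFieldType) (y h x z : C) :
  x \is Num.real -> z \is Num.real ->
  `|y - h * (x + 'i * z)| ^+ 2 =
  `|y - h * x| ^+ 2 + (`|h * z| ^+ 2 + 'i * z * (y * h^* - y^* * h)).
Proof.
move=> /conj_Creal x_conj /conj_Creal z_conj.
rewrite !normCK !(rmorphB, rmorphM, rmorphD) /= conjCi x_conj z_conj.
by have i2 := sqrCi C; ring: i2.
Qed.

Section SeparableConstellation.
Variables (C : numClosedFieldType) (N : nat).
Variables (X : {ffun 'I_(NI N) -> bool} -> C) (Z : {ffun 'I_(NQ N) -> bool} -> C).
Variable a : 'I_(2 ^ N) -> C.
Hypotheses (X_real : forall f, X f \is Num.real) (Z_real : forall g, Z g \is Num.real).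
Hypothesis aE : forall i, a i = X (ibits N i) + 'i * Z (qbits N i).

Lemma dbar_dist2_mixed_eq0 (S : {set 'I_N}) :
  (exists2 n, n \in S & (n < NI N)%N) -> (exists2 n, n \in S & (NI N <= n)%N) ->
  forall y h, dbar (dist2 a y h) S = 0.
Proof.
move=> [p pS lt_p_NI] [q qS NI_le_q] y h.
have split_d i : dist2 a y h i = `|y - h * X (ibits N i)| ^+ 2 +
    (`|h * Z (qbits N i)| ^+ 2 + 'i * Z (qbits N i) * (y * h^* - y^* * h)).
  by rewrite /dist2 aE normC_sub_mul_cplx.
rewrite (eq_dbar _ split_d) dbarD.
rewrite (dbar_ibits_eq0 (fun f => `|y - h * X f| ^+ 2) qS NI_le_q).
by rewrite (dbar_qbits_eq0 (fun g => `|h * Z g| ^+ 2 + 'i * Z g * (y * h^* - y^* * h)) pS lt_p_NI) addr0.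
Qed.

Lemma dbar_dist2_card_gt_eq0 (S : {set 'I_N}) :
  (NI N < #|S|)%N -> forall y h, dbar (dist2 a y h) S = 0.
Proof. by move=> /card_gt_NI_mixed [] /dbar_dist2_mixed_eq0; apply. Qed.

Lemma dbar_dist2_sub (S : {set 'I_N}) :
  dbar (dist2 a 1 1) S - dbar (dist2 a (-1) 1) S = -4 * dbar (fun i => X (ibits N i)) S.
Proof.
rewrite -dbarB -dbarZ; apply: eq_dbar => i; rewrite /dist2 !mul1r aE.
rewrite !normCK !(rmorphB, rmorphD, rmorphM, rmorphN) /= rmorph1.
by rewrite conjCi !conj_Creal //; ring.
Qed.

End SeparableConstellation.

Lemma dbar_pam_inphase_neq0 (R : numDomainType) N (c : R)
    (gI : 'I_(2 ^ NI N) -> {ffun 'I_(NI N) -> bool}) gIi :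
  c != 0 -> (0 < N)%N -> gray_labelling gI -> cancel gI gIi ->
  dbar (fun i => pam c (NI N) (gIi (ibits N i))) (inphase N) != 0.
Proof.
move=> c_neq0 N_gt0 gI_gray gIK.
rewrite (dbar_ibits_inphase (fun f => pam c (NI N) (gIi f))) (reindex gI) /=; last first.
  exact/onW_bij/gI_gray.1.
under eq_bigr do rewrite gIK (gray_par _ gI_gray) mulrCA [X in _ * X]mulrC.
rewrite -mulr_sumr sum_sign_pam ?NI_gt0 // mulf_neq0 ?par_neq0 // oppr_eq0.
by rewrite mulf_neq0 // pnatr_eq0 expn_eq0.
Qed.

Unset Implicit Arguments.

Theorem theorem2 (N : nat) (hN : (2 <= N)%N)
  (C : numClosedFieldType) (c : C) (hc : 0 < c)
  (gI : 'I_(2 ^ NI N) -> {ffun 'I_(NI N) -> bool})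
  (gQ : 'I_(2 ^ NQ N) -> {ffun 'I_(NQ N) -> bool})
  (hgI : gray_labelling gI) (hgQ : gray_labelling gQ)
  (a : 'I_(2 ^ N) -> C)
  (ha : forall (i : 'I_(2 ^ N)) (u : 'I_(2 ^ NI N)) (v : 'I_(2 ^ NQ N)),
        gI u = ibits N i -> gQ v = qbits N i ->
        a i = c * ((u.*2.+1)%:R - (2 ^ NI N)%:R)
              + 'i * (c * ((v.*2.+1)%:R - (2 ^ NQ N)%:R))) :
  (forall S : {set 'I_N},
     (exists2 n, n \in S & (n < NI N)%N) ->
     (exists2 n, n \in S & (NI N <= n)%N) ->
     forall y h : C, dbar (dist2 a y h) S = 0)
  /\
  ((exists S : {set 'I_N}, #|S| = NI N /\
      exists y h : C, dbar (dist2 a y h) S != 0)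
   /\ (forall S : {set 'I_N}, (NI N < #|S|)%N ->
      forall y h : C, dbar (dist2 a y h) S = 0)).
Proof.
have [[gIi gIK gIiK] _] := hgI; have [[gQi _ gQiK] _] := hgQ.
pose X f := pam c (NI N) (gIi f); pose Z g := pam c (NQ N) (gQi g).
have X_real f : X f \is Num.real by apply/pam_real/gtr0_real.
have Z_real g : Z g \is Num.real by apply/pam_real/gtr0_real.
have aE i : a i = X (ibits N i) + 'i * Z (qbits N i) by apply: ha; rewrite ?gIiK ?gQiK.
split; first exact: dbar_dist2_mixed_eq0 aE.
split; last exact: dbar_dist2_card_gt_eq0 aE.
exists (inphase N); split; first exact: card_inphase.
have : dbar (dist2 a 1 1) (inphase N) - dbar (dist2 a (-1) 1) (inphase N) != 0.
  rewrite (dbar_dist2_sub X_real Z_real aE) mulf_neq0 ?oppr_eq0 ?pnatr_eq0 //.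
  exact: dbar_pam_inphase_neq0 (lt0r_neq0 hc) (ltnW hN) hgI gIK.
case: (eqVneq (dbar (dist2 a 1 1) (inphase N)) 0) => [-> | ]; last by exists 1, 1.
by rewrite sub0r oppr_eq0; exists (-1), 1.
Qed.
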